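(* Suppose $0<\delta < \pi/g$. Then for every $\vec \theta \in R_{\delta}^B$ we have $|\Phi(\vec \theta)| \leq 1 - \frac{11}{48} g^{-k} \left( \frac{\delta}{2} \right)^2$.
   Context: Let $g\ge 2$, $k\ge 2$ be integers, $\mathbb Z_g$ the integers mod $g$, and $d=\binom{k}{2}(g-1)$. Index the coordinates of $\mathbb R^d$ by pairs $(\{i,j\},a)$ with $1\le i<j\le k$ and $a\in\mathbb Z_g\setminus\{0\}$. Define $Z:(\mathbb Z_g)^k\to\mathbb R^d$ by $[Z(\vec x)]_{\{i,j\},a}=1-1/g$ if $x_i-x_j=a$ and $-1/g$ otherwise. Define $\Phi(\vec\theta)=\sum_{\vec x\in(\mathbb Z_g)^k} g^{-k}e^{i\vec\theta\cdot Z(\vec x)}$. For $\vec\theta\in[-\pi,\pi)^d$ and $\delta>0$ let $B_\delta(\vec\theta)=\{\vec\mu\in[-\pi,\pi)^d: \vec\mu\equiv\vec\theta+\vec\zeta \pmod{2\pi}$ componentwise, for some $\vec\zeta$ with $|\zeta_{\{i,j\},a}|<\delta$ for all coordinates$\}$. Let $L=\{\vec\theta\in[-\pi,\pi)^d: \theta_{\{i,j\},a}\equiv 0 \pmod{2\pi/g}$ for all coordinates$\}$ and $R_\delta^B=[-\pi,\pi)^d\setminus\bigcup_{\vec\eta\in L}B_\delta(\vec\eta)$. *)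

From HB Require Import structures.
From mathcomp Require Import all_boot all_order all_algebra.
From mathcomp Require Import reals trigo.
From mathcomp Require Export complex.
Set Implicit Arguments.
Unset Strict Implicit.
Unset Printing Implicit Defensive.
Import Order.TTheory GRing.Theory Num.Theory.
Local Open Scope ring_scope.

Section Defs.
Variables (R : realType) (g k : nat).

(* A vector of R^d, d = C(k,2)(g-1), is represented as a function of
   (i, j, a) : 'I_k * 'I_k * 'Z_g; only the "valid" coordinates
   (i < j, a != 0), i.e. the pairs ({i,j}, a) of the paper, are ever used. *)
Definition vec := 'I_k -> 'I_k -> 'Z_g -> R.

Definition valid (i j : 'I_k) (a : 'Z_g) : bool := (i < j)%N && (a != 0).

Definition Zvec (x : {ffun 'I_k -> 'Z_g}) : vec :=
  fun i j a => if x i - x j == a then 1 - (g%:R)^-1 else - (g%:R)^-1.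

Definition dotv (u v : vec) : R :=
  \sum_(i : 'I_k) \sum_(j : 'I_k | (i < j)%N) \sum_(a : 'Z_g | a != 0)
     u i j a * v i j a.

Definition expi (t : R) : R[i] := (cos t +i* sin t)%C.

Definition Phi (theta : vec) : R[i] :=
  \sum_(x : {ffun 'I_k -> 'Z_g}) ((g%:R ^- k)%:C * expi (dotv theta (Zvec x)))%C.

Definition inbox (theta : vec) : Prop :=
  forall i j a, valid i j a -> - pi <= theta i j a < pi.

Definition inB (delta : R) (eta mu : vec) : Prop :=
  inbox mu /\
  exists zeta : vec,
    (forall i j a, valid i j a -> `|zeta i j a| < delta) /\
    (forall i j a, valid i j a ->
       exists n : int, mu i j a = eta i j a + zeta i j a + n%:~R * (2 * pi)).

Definition inL (eta : vec) : Prop :=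
  inbox eta /\
  forall i j a, valid i j a ->
    exists m : int, eta i j a = m%:~R * (2 * pi / g%:R).

Definition inRB (delta : R) (theta : vec) : Prop :=
  inbox theta /\ forall eta : vec, inL eta -> ~ inB delta eta theta.

End Defs.

(* Write f(x) = theta . Z(x), so that Phi(theta) is the average of the unit vectors
   e^{i f(x)}.  If two phases f(x), f(y) are at distance at least s = delta/2 from each
   other modulo 2 pi, the pair e^{i f(x)} + e^{i f(y)} has modulus at most 2 - c with
   1 - 2c >= cos s, and the Taylor bound cos s <= 1 - (11/24) s^2 yields the saving
   c g^{-k} with c = (11/48) s^2.  Otherwise all phases agree modulo 2 pi up to s.
   Summing over u the second difference of f in the coordinates x_i = u, x_j = -a
   cancels every coordinate of theta except ({i,j}, a) and gives -g theta_{{i,j},a};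
   hence g theta is within g delta of 2 pi Z, i.e. theta lies in B_delta(eta) for a
   lattice point eta of L, contradicting theta in R^B_delta. *)

From HB Require Import structures.
From mathcomp Require Import all_boot all_order all_algebra.
From mathcomp Require Import reals trigo complex.
From mathcomp Require Import topology normedtype sequences.
From mathcomp Require Import lra ring zify.
Import Order.TTheory GRing.Theory Num.Theory.
Import numFieldNormedType.Exports.
Local Open Scope ring_scope.

Set Implicit Arguments.
Unset Strict Implicit.
Unset Printing Implicit Defensive.

Section Cosine.
Variable R : realType.
Implicit Types (s x D : R).

(* The tail of the cosine series is alternating with decreasing terms when x <= 1. *)
Lemma cos_lt_quartic x : 0 < x -> x <= 1 -> cos x < 1 - x ^+ 2 / 2 + x ^+ 4 / 24.
Proof.
move=> x_gt0 x_le1.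
have /cvgN cvg_cos := @cvg_cos_coeff' R x.
rewrite -(opprK (cos x)) ltrNl -(cvg_lim (@Rhausdorff R) cvg_cos).
have -> : - (1 - x ^+ 2 / 2 + x ^+ 4 / 24) = \sum_(0 <= i < 3) - cos_coeff' x i.
  rewrite !big_nat_recl // big_nil addr0 /cos_coeff' /= !expr0z expr1z.
  rewrite -exprnP sqrrN expr1n double0 fact0.
  by rewrite (_ : (1.*2)`! = 2)%N // (_ : (2.*2)`! = 24)%N //; field.
rewrite -seriesN lt_sum_lim_series //; first by move/cvgP: cvg_cos; rewrite seriesN.
move=> d; rewrite /cos_coeff' -!exprnP.
rewrite -[(-1) ^+ (3 + _)]signr_odd -[(-1) ^+ (3 + d.*2.+1)]signr_odd.
rewrite !oddD odd_double /= negbK odd_double expr1 expr0 !mul1r mulN1r mulNr opprK.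
rewrite addnS doubleS subr_gt0; set m := (3 + d.*2).*2.
have xm_gt0 : 0 < x ^+ m by rewrite exprn_gt0.
have fact_gt0 : 0 < (m`!%:R : R) by rewrite ltr0n fact_gt0.
have fact_lt : (m`!%:R : R) < (m.+2)`!%:R by rewrite ltr_nat ltn_pfact // double_gt0.
apply: (le_lt_trans (y := x ^+ m / (m.+2)`!%:R)).
  rewrite ler_pM2r ?invr_gt0 ?(lt_trans fact_gt0) // exprSr exprSr -mulrA.
  by apply: ler_piMr; [rewrite ltW | rewrite mulr_ile1 // ltW].
by rewrite (ltr_pM2l xm_gt0) ltf_pV2 ?posrE // (lt_trans fact_gt0).
Qed.

Lemma cos_le_quadratic s : 0 < s -> s <= 1 -> cos s <= 1 - 11 / 24 * s ^+ 2.
Proof.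
move=> s_gt0 s_le1; have := cos_lt_quartic s_gt0 s_le1.
have s4_le : s ^+ 4 <= s ^+ 2.
  by rewrite -[4%N]/(2 + 2)%N exprD ler_piMr ?sqr_ge0 // expr_le1 // ltW.
move: s4_le; move: (s ^+ 4) (s ^+ 2) => s4 s2; lra.
Qed.

Lemma cosDz D (n : int) : cos (D + n%:~R * (2 * pi)) = cos D.
Proof.
rewrite mulr_natl; case: n => m; first by rewrite -pmulrn mulr_natl periodicn //; exact: cosD2pi.
rewrite NegzE mulrNz mulNr mulr_natl -[in RHS](subrK (pi *+ 2 *+ m.+1) D).
by rewrite periodicn //; exact: cosD2pi.
Qed.

End Cosine.

Section NearMultiple.
Variable R : numFieldType.
Implicit Types (c e x y : R).

Definition near_multiple c e x := exists n : int, `|x - n%:~R * c| < e.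

Lemma near_multipleN c e x : near_multiple c e (- x) -> near_multiple c e x.
Proof. by case=> n h; exists (- n); rewrite -normrN mulrNz mulNr opprB addrC. Qed.

Lemma near_multipleB c e e' x y :
  near_multiple c e x -> near_multiple c e' y -> near_multiple c (e + e') (x - y).
Proof.
case=> m hm [n hn]; exists (m - n); rewrite rmorphB /= mulrBl.
have -> : x - y - (m%:~R * c - n%:~R * c) = (x - m%:~R * c) - (y - n%:~R * c) by ring.
by apply: le_lt_trans (ler_normB _ _) _; rewrite ltrD.
Qed.

Lemma near_multiple_sum (I : finType) (i0 : I) c e (F : I -> R) :
  (forall u, near_multiple c e (F u)) -> near_multiple c (e *+ #|I|) (\sum_u F u).
Proof.
case/fin_all_exists=> n hn; exists (\sum_u n u).
rewrite rmorph_sum mulr_suml -sumrB -sumr_const.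
apply: le_lt_trans (ler_norm_sum _ _ _) _; apply: ltr_sum => // .
by apply/hasP; exists i0; rewrite ?mem_index_enum.
Qed.

Lemma near_multiple_divl (m : R) c e x :
  0 < m -> near_multiple c (m * e) (m * x) -> near_multiple (c / m) e x.
Proof.
move=> m_gt0 [n hn]; exists n; rewrite -(ltr_pM2l m_gt0) -[m in m * `|_|]gtr0_norm //.
by rewrite -normrM mulrBr mulrCA (mulrCA m) divff ?mulr1 ?gt_eqF.
Qed.

End NearMultiple.

Lemma divz_eq_centered (N : int) (g : nat) : (0 < g)%N ->
  exists n m : int, N = n + m * g%:Z /\ - (g%:Z) <= 2 * n < g%:Z.
Proof.
move=> g_gt0; have N_eq := divz_eq N g%:Z.
have mod_ge0 : 0 <= (N %% g%:Z)%Z by rewrite modz_ge0 //; lia.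
have mod_lt : (N %% g%:Z)%Z < g%:Z by rewrite ltz_pmod // ltz_nat.
have [small|large] := boolP (2 * (N %% g%:Z)%Z < g%:Z).
  by exists (N %% g%:Z)%Z, (N %/ g%:Z)%Z; split; [rewrite addrC | lia].
exists ((N %% g%:Z)%Z - g%:Z), ((N %/ g%:Z)%Z + 1); split; last by lia.
by rewrite {1}N_eq; ring.
Qed.

Section NearMultipleReal.
Variable R : realType.

Lemma near_multiple_of_cos_lt (s D : R) :
  0 < s -> s <= pi -> cos s < cos D -> near_multiple (2 * pi) s D.
Proof.
move=> s_gt0 s_le_pi cos_lt.
have pi_gt0 := @pi_gt0 R.
pose n := Num.floor ((D + pi) / (2 * pi)); exists n.
have n_le := floor_le ((D + pi) / (2 * pi)).
have n_gt := floorD1_gt ((D + pi) / (2 * pi)).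
rewrite -/n ler_pdivlMr ?mulr_gt0 // in n_le.
rewrite -/n ltr_pdivrMr ?mulr_gt0 // intrD mulrDl mul1r in n_gt.
have dist_le : `|D - n%:~R * (2 * pi)| <= pi by rewrite ler_norml; apply/andP; split; lra.
rewrite -ltr_cos ?in_itv /= ?(ltW s_gt0) ?s_le_pi ?normr_ge0 ?dist_le //.
by rewrite cos_norm -mulNr -rmorphN cosDz.
Qed.

Lemma near_multiple_centered (g : nat) (e x : R) : (0 < g)%N ->
  near_multiple (2 * pi / g%:R : R) e x ->
  exists2 n : int, - (pi : R) <= n%:~R * (2 * pi / g%:R) < (pi : R) &
    near_multiple (2 * pi : R) e (x - n%:~R * (2 * pi / g%:R)).
Proof.
move=> g_gt0 [N hN]; have [n [m [N_eq /andP[n_ge n_lt]]]] := divz_eq_centered N g_gt0.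
have pi_gt0 := @pi_gt0 R.
have gR_gt0 : 0 < g%:R :> R by rewrite ltr0n.
exists n.
  move: n_ge n_lt; rewrite -(ler_int R) -(ltr_int R) rmorphN rmorphM /= => n_ge n_lt.
  by rewrite mulrA ler_pdivlMr ?ltr_pdivrMr //; apply/andP; split; nra.
exists m; rewrite N_eq rmorphD rmorphM /= in hN.
suff -> : x - n%:~R * (2 * pi / g%:R) - m%:~R * (2 * pi) =
          x - (n%:~R + m%:~R * g%:R) * (2 * pi / g%:R) by [].
by field; rewrite gt_eqF.
Qed.

End NearMultipleReal.

Section UnitVectors.
Variable R : realType.

Lemma norm_expi (t : R) : `|expi t| = 1.
Proof. by rewrite normc_def /= cos2Dsin2 sqrtr1. Qed.

Lemma norm_expiD_le (a b c : R) :
  cos (a - b) <= 1 - 2 * c -> `|expi a + expi b| <= (2 - c)%:C%C.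
Proof.
move=> cos_le; have c_le1 : c <= 1 by have := cos_geN1 (a - b); lra.
have c_le2 : 0 <= 2 - c by lra.
rewrite normc_def /= lecR -(ger0_norm c_le2) -sqrtr_sqr ler_sqrt ?sqr_ge0 //.
have -> : (cos a + cos b) ^+ 2 + (sin a + sin b) ^+ 2 =
    (cos a ^+ 2 + sin a ^+ 2) + (cos b ^+ 2 + sin b ^+ 2) + 2 * cos (a - b).
  by rewrite cosB; ring.
rewrite !cos2Dsin2; nra.
Qed.

Lemma norm_sum_expi_le (X : finType) (w c : R) (h : X -> R) (x y : X) :
  x != y -> 0 <= w -> cos (h x - h y) <= 1 - 2 * c ->
  `|\sum_z (w%:C * expi (h z))%C| <= (w *+ #|X| - w * c)%:C%C.
Proof.
move=> x_neq_y w_ge0 cos_le.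
have split2 (V : zmodType) (F : X -> V) :
    \sum_z F z = F x + F y + \sum_(z | (z != x) && (z != y)) F z.
  by rewrite (bigD1 x) //= (bigD1 y) 1?eq_sym //= addrA.
have normw : `|w%:C%C| = w%:C%C by rewrite ger0_norm // lecR.
rewrite -sumr_const split2 split2 -mulrDr.
apply: le_trans (ler_normD _ _) _; rewrite normrM normw.
have -> : w + w + \sum_(z | (z != x) && (z != y)) w - w * c =
          w * (2 - c) + \sum_(z | (z != x) && (z != y)) w by ring.
rewrite rmorphD rmorphM rmorph_sum; apply: lerD.
  by apply: ler_wpM2l; [rewrite lecR | exact: norm_expiD_le].
apply: le_trans (ler_norm_sum _ _ _) _; apply: ler_sum => z _.
by rewrite normrM normw norm_expi mulr1.
Qed.

End UnitVectors.

Section DotProduct.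
Variables (R : realType) (g k : nat).
Implicit Types (t u w : vec R g k).

Lemma dotvBr t u w :
  dotv t u - dotv t w = dotv t (fun p q b => u p q b - w p q b).
Proof.
rewrite /dotv -sumrB; apply: eq_bigr => p _; rewrite -sumrB; apply: eq_bigr => q _.
by rewrite -sumrB; apply: eq_bigr => b _; rewrite mulrBr.
Qed.

Lemma dotvDr t u w :
  dotv t u + dotv t w = dotv t (fun p q b => u p q b + w p q b).
Proof.
rewrite /dotv -big_split; apply: eq_bigr => p _; rewrite -big_split.
by apply: eq_bigr => q _; rewrite -big_split; apply: eq_bigr => b _; rewrite mulrDr.
Qed.

Lemma dotv_sumr (I : finType) t (F : I -> vec R g k) :
  \sum_z dotv t (F z) = dotv t (fun p q b => \sum_z F z p q b).
Proof.
rewrite /dotv exchange_big; apply: eq_bigr => p _; rewrite exchange_big.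
apply: eq_bigr => q _; rewrite exchange_big; apply: eq_bigr => b _.
by rewrite mulr_sumr.
Qed.

Lemma eq_dotvr t u w :
  (forall p q b, valid p q b -> u p q b = w p q b) -> dotv t u = dotv t w.
Proof.
move=> eq_uw; apply: eq_bigr => p _; apply: eq_bigr => q pq.
by apply: eq_bigr => b b0; rewrite eq_uw //; apply/andP.
Qed.

Lemma dotv_delta t i j a (r : R) : valid i j a ->
  dotv t (fun p q b => if [&& p == i, q == j & b == a] then r else 0) = t i j a * r.
Proof.
case/andP=> ij a0; rewrite /dotv (bigD1 i) //= [X in _ + X]big1 ?addr0; last first.
  by move=> p /negbTE pi; apply: big1 => q _; apply: big1 => b _; rewrite pi mulr0.
rewrite (bigD1 j) //= [X in _ + X]big1 ?addr0; last first.
  by move=> q /andP[_ /negbTE qj]; apply: big1 => b _; rewrite eqxx qj mulr0.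
rewrite (bigD1 a) //= [X in _ + X]big1 ?addr0; last first.
  by move=> b /andP[_ /negbTE ba]; rewrite !eqxx ba mulr0.
by rewrite !eqxx.
Qed.

End DotProduct.

Section Phases.
Variables (R : realType) (g k : nat).
Hypothesis g_gt1 : (1 < g)%N.
Variable theta : vec R g k.
Implicit Types (x y : {ffun 'I_k -> 'Z_g}) (i j p q : 'I_k) (a b u v : 'Z_g).

Definition phase (x : {ffun 'I_k -> 'Z_g}) : R := dotv theta (Zvec R x).

Lemma card_Zg : #|'Z_g| = g.
Proof. by rewrite card_ord Zp_cast. Qed.

Lemma Phi_le_of_far (c : R) x y : 0 < c -> cos (phase x - phase y) <= 1 - 2 * c ->
  `|Phi theta| <= (1 - g%:R ^- k * c)%:C%C.
Proof.
move=> c_gt0 cos_le.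
have x_neq_y : x != y by apply: contraTneq cos_le => ->; rewrite subrr cos0 -ltNge; lra.
have gR_neq0 : g%:R != 0 :> R by rewrite pnatr_eq0 -lt0n ltnW.
have w_ge0 : 0 <= g%:R ^- k :> R by rewrite invr_ge0 exprn_ge0 ?ler0n.
apply: le_trans (norm_sum_expi_le x_neq_y w_ge0 cos_le) _.
by rewrite card_ffun card_Zg card_ord -[_ *+ _]mulr_natr natrX mulVf ?expf_neq0.
Qed.

Definition assign2 (i j : 'I_k) (u v : 'Z_g) : {ffun 'I_k -> 'Z_g} :=
  [ffun l => if l == i then u else if l == j then v else 0].

Definition Zdiff2 i j u v : vec R g k := fun p q b =>
  Zvec R (assign2 i j u v) p q b - Zvec R (assign2 i j u 0) p q b
  - Zvec R (assign2 i j 0 v) p q b + Zvec R (assign2 i j 0 0) p q b.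

Lemma ZvecE x p q b : Zvec R x p q b = (x p - x q == b)%:R - g%:R^-1.
Proof. by rewrite /Zvec; case: eqP; rewrite ?sub0r. Qed.

Lemma Zvec_local x y p q b :
  x p = y p -> x q = y q -> Zvec R x p q b = Zvec R y p q b.
Proof. by rewrite /Zvec => -> ->. Qed.

Lemma Zdiff2_off i j u v p q b :
  ((p != i) && (q != i)) || ((p != j) && (q != j)) -> Zdiff2 i j u v p q b = 0.
Proof.
rewrite /Zdiff2; case/orP=> /andP[/negbTE pi /negbTE qi].
  rewrite (@Zvec_local (assign2 i j u v) (assign2 i j 0 v)) ?ffunE ?pi ?qi //.
  by rewrite (@Zvec_local (assign2 i j u 0) (assign2 i j 0 0)) ?ffunE ?pi ?qi //; ring.
rewrite (@Zvec_local (assign2 i j u v) (assign2 i j u 0)) ?ffunE ?pi ?qi //.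
by rewrite (@Zvec_local (assign2 i j 0 v) (assign2 i j 0 0)) ?ffunE ?pi ?qi //; ring.
Qed.

Lemma sum_Zdiff2_diag i j v b : j != i -> b != 0 ->
  \sum_u Zdiff2 i j u v i j b = - (g%:R * (- v == b)%:R).
Proof.
move=> /negbTE ji /negbTE b0.
have sum_eq1 (c : 'Z_g) : \sum_u ((u == c)%:R : R) = 1.
  by rewrite (bigD1 c) //= eqxx big1 ?addr0 // => u /negbTE ->.
rewrite (eq_bigr (fun u => (u == b + v)%:R - (u == b)%:R - (- v == b)%:R)) => [|u _].
  by rewrite !sumrB !sum_eq1 subrr sub0r sumr_const card_Zg mulr_natl.
rewrite /Zdiff2 !ZvecE !ffunE !eqxx ji subr_eq !subr0 (eq_sym 0 b) b0 !sub0r; ring.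
Qed.

Lemma sum_Zdiff2 i j v p q b : (i < j)%N -> valid p q b ->
  \sum_u Zdiff2 i j u v p q b = if [&& p == i, q == j & b == - v] then - g%:R else 0.
Proof.
move=> ij /andP[pq b0].
have [/andP[/eqP -> /eqP ->] | not_ij] := boolP ((p == i) && (q == j)).
  rewrite sum_Zdiff2_diag // 1?eq_sym ?neq_ltn ?ij ?orbT //=.
  by rewrite !eqxx; case: (b == - v); rewrite ?mulr1 ?mulr0 ?oppr0.
rewrite andbA (negbTE not_ij) big1 // => u _; apply: Zdiff2_off.
by move: not_ij pq ij; rewrite -!val_eqE /=; lia.
Qed.

Lemma sum_phase_diff2 i j a : valid i j a ->
  \sum_u (phase (assign2 i j u (- a)) - phase (assign2 i j u 0)
          - phase (assign2 i j 0 (- a)) + phase (assign2 i j 0 0))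
  = - (g%:R * theta i j a).
Proof.
move=> ija; have /andP[ij _] := ija.
under eq_bigr => u _ do rewrite /phase !dotvBr dotvDr.
rewrite dotv_sumr (@eq_dotvr _ _ _ _ _ (fun p q b =>
  if [&& p == i, q == j & b == - - a] then - g%:R else 0)) => [|p q b pqb].
  by rewrite dotv_delta ?opprK // mulrN mulrC.
exact: sum_Zdiff2.
Qed.

Lemma near_lattice_of_close_phases (e : R) :
  (forall x y, near_multiple (2 * pi) (e / 2) (phase x - phase y)) ->
  forall i j a, valid i j a -> near_multiple (2 * pi / g%:R) e (theta i j a).
Proof.
move=> close i j a ija.
apply: (@near_multiple_divl _ g%:R); first by rewrite ltr0n ltnW.
apply: near_multipleN; rewrite -sum_phase_diff2 //.
have -> : g%:R * e = e *+ #|'Z_g| by rewrite card_Zg mulr_natl.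
apply: (near_multiple_sum (0 : 'Z_g)) => u; rewrite [e]splitr.
have -> : forall A B C D : R, A - B - C + D = (A - B) - (C - D) by move=> *; ring.
exact: near_multipleB.
Qed.

End Phases.

Lemma inB_lattice_of_near (R : realType) (g k : nat) (delta : R) (theta : vec R g k) :
  (0 < g)%N -> inbox theta ->
  (forall i j a, valid i j a -> near_multiple (2 * pi / g%:R) delta (theta i j a)) ->
  exists eta, inL eta /\ inB delta eta theta.
Proof.
move=> g_gt0 theta_box near_L.
have near_centered (p : 'I_k * 'I_k * 'Z_g) : exists nm : int * int,
    valid p.1.1 p.1.2 p.2 -> - (pi : R) <= nm.1%:~R * (2 * pi / g%:R) < (pi : R) /\
    `|theta p.1.1 p.1.2 p.2 - nm.1%:~R * (2 * pi / g%:R) - nm.2%:~R * (2 * pi)| < delta.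
  case: p => [[i j] a] /=.
  have [/near_L/(near_multiple_centered g_gt0)[n n_box [m hm]] | _] := boolP (valid i j a).
    by exists (n, m).
  by exists (0, 0).
have [nm hnm] := fin_all_exists near_centered.
pose eta : vec R g k := fun i j a => (nm (i, j, a)).1%:~R * (2 * pi / g%:R).
exists eta; split; split => //.
- by move=> i j a /(hnm (i, j, a))[].
- by move=> i j a _; exists (nm (i, j, a)).1.
exists (fun i j a => theta i j a - eta i j a - (nm (i, j, a)).2%:~R * (2 * pi)); split.
  by move=> i j a /(hnm (i, j, a))[].
by move=> i j a _; exists (nm (i, j, a)).2; ring.
Qed.

Theorem lemma3p2 (R : realType) (g k : nat) (hg : (2 <= g)%N) (hk : (2 <= k)%N)
  (delta : R) (hd0 : 0 < delta) (hd1 : delta < pi / g%:R)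
  (theta : vec R g k) :
  inRB delta theta ->
  `|Phi theta| <= ((1 - 11%:R / 48%:R * (g%:R ^- k) * (delta / 2%:R) ^+ 2 : R)%:C)%C.
Proof.
move=> [theta_box far_from_L].
have pi_gt2 := @pi_ge2 R; have pi_lt4 : pi < 4 :> R by have := @pihalf_lt2 R; lra.
have delta_lt : delta < pi / 2.
  apply: lt_le_trans hd1 _.
  by rewrite ler_pM2l ?lef_pV2 ?posrE ?ler_nat ?ltr0n ?(ltnW hg) //; lra.
set s := delta / 2.
have s_gt0 : 0 < s by rewrite /s; lra.
have s_le1 : s <= 1 by rewrite /s; lra.
have cos_s := cos_le_quadratic s_gt0 s_le1.
have [/existsP[x /existsP[y far]] | /existsPn close] :=
  boolP [exists x, exists y, cos (phase theta x - phase theta y) <= cos s].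
  apply: le_trans (Phi_le_of_far (c := 11 / 48 * s ^+ 2) hg _ (le_trans far _)) _.
  - by have := exprn_gt0 2 s_gt0; lra.
  - by move: cos_s; move: (s ^+ 2) => s2; lra.
  - by rewrite lecR mulrCA mulrA.
have near_phases x y : near_multiple (2 * pi) s (phase theta x - phase theta y).
  apply: near_multiple_of_cos_lt s_gt0 _ _; first by lra.
  by move/existsPn: (close x) => /(_ y); rewrite -ltNge.
have [eta [eta_L theta_B]] :=
  inB_lattice_of_near (ltnW hg) theta_box (near_lattice_of_close_phases hg near_phases).
by case: (far_from_L eta eta_L theta_B).
Qed.
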